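(* Let $\Gamma$ be a typing context and $A$ a type, both closed (containing no atomic types). If there is a term $t$ with $\Gamma\vdash t:A$, then either there is a closed term $\emptyset\vdash u:A$, or there is a term $\Gamma\vdash w:0$.
   Context: Types: $A,B ::= X \mid A\to B \mid A_1\times A_2 \mid 1 \mid A_1+A_2 \mid 0$ ($X$ atomic); a closed type contains no atomic type, and a closed context contains only closed types. Terms: $x \mid \lambda x.t \mid t\,u \mid (t_1,t_2) \mid \pi_i t \mid () \mid \sigma_i t \mid \mathtt{match}\ t\ \mathtt{with}\ (\sigma_1 x_1\to u_1 \mid \sigma_2 x_2\to u_2) \mid \mathtt{absurd}(t)$, with the standard simple typing rules of the simply-typed $\lambda$-calculus with functions, products, unit, binary sums and the empty type ($\mathtt{absurd}(t):A$ for any $A$ when $t:0$). *)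

(* Curry-style (unannotated) terms,
   variables as de Bruijn indices; a context is a list of types, variable
   n denoting the n-th entry (most recently bound first). *)
From Stdlib Require Import List.
Import ListNotations.

Inductive ty : Type :=
| TAtom : nat -> ty
| TArr  : ty -> ty -> ty
| TProd : ty -> ty -> ty
| TUnit : ty
| TSum  : ty -> ty -> ty
| TZero : ty.

Inductive tm : Type :=
| Var   : nat -> tm
| Lam   : tm -> tm
| App   : tm -> tm -> tm
| Pair  : tm -> tm -> tm
| Proj1 : tm -> tm
| Proj2 : tm -> tm
| Unit  : tm
| Inj1  : tm -> tm
| Inj2  : tm -> tm
| Match : tm -> tm -> tm -> tm           (* match t with s1 x1 -> u1 | s2 x2 -> u2 ; x_i bound in u_i *)
| Absurd : tm -> tm.

Definition ctx := list ty.

Inductive typed : ctx -> tm -> ty -> Prop :=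
| T_Var : forall G n A, nth_error G n = Some A -> typed G (Var n) A
| T_Lam : forall G t A B, typed (A :: G) t B -> typed G (Lam t) (TArr A B)
| T_App : forall G t u A B, typed G t (TArr A B) -> typed G u A -> typed G (App t u) B
| T_Pair : forall G t1 t2 A1 A2, typed G t1 A1 -> typed G t2 A2 ->
    typed G (Pair t1 t2) (TProd A1 A2)
| T_Proj1 : forall G t A1 A2, typed G t (TProd A1 A2) -> typed G (Proj1 t) A1
| T_Proj2 : forall G t A1 A2, typed G t (TProd A1 A2) -> typed G (Proj2 t) A2
| T_Unit : forall G, typed G Unit TUnit
| T_Inj1 : forall G t A1 A2, typed G t A1 -> typed G (Inj1 t) (TSum A1 A2)
| T_Inj2 : forall G t A1 A2, typed G t A2 -> typed G (Inj2 t) (TSum A1 A2)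
| T_Match : forall G t u1 u2 A1 A2 C, typed G t (TSum A1 A2) ->
    typed (A1 :: G) u1 C -> typed (A2 :: G) u2 C -> typed G (Match t u1 u2) C
| T_Absurd : forall G t A, typed G t TZero -> typed G (Absurd t) A.

Fixpoint closed_ty (A : ty) : Prop :=
  match A with
  | TAtom _ => False
  | TArr A B | TProd A B | TSum A B => closed_ty A /\ closed_ty B
  | TUnit | TZero => True
  end.

Definition closed_ctx (G : ctx) : Prop := Forall closed_ty G.

From Stdlib Require Import List Bool.
Import ListNotations.

(* Read types as formulas of classical propositional logic and evaluate them
   in the two-element Boolean algebra.  Typing is sound for this semantics, so
   if every hypothesis of [G] is true then so is [A].  Conversely, by induction
   on a closed type, a true closed type has a closed inhabitant and a false one
   has a closed refutation of type [A -> 0].  Hence either [A] is closed-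
   inhabited, or some hypothesis of [G] is false and applying its refutation to
   the corresponding variable yields a term of type [0] in [G]. *)

Fixpoint ty_eval (rho : nat -> bool) (A : ty) : bool :=
  match A with
  | TAtom X => rho X
  | TArr A B => implb (ty_eval rho A) (ty_eval rho B)
  | TProd A B => ty_eval rho A && ty_eval rho B
  | TUnit => true
  | TSum A B => ty_eval rho A || ty_eval rho B
  | TZero => false
  end.

Lemma typed_weaken G D t A : typed G t A -> typed (G ++ D) t A.
Proof.
  intros Ht; revert D; induction Ht; intros D; try (econstructor; eauto; fail).
  constructor; rewrite nth_error_app1; [assumption |].
  apply nth_error_Some; congruence.
Qed.

Lemma typed_weaken_closed D t A : typed [] t A -> typed D t A.
Proof. exact (fun Ht => typed_weaken [] D t A Ht). Qed.

Lemma typed_sound rho G t A :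
  typed G t A -> Forall (fun B => ty_eval rho B = true) G -> ty_eval rho A = true.
Proof.
  intros Ht; induction Ht; intros HG; simpl in *.
  - eapply (proj1 (Forall_forall _ G) HG), nth_error_In; eassumption.
  - destruct (ty_eval rho A) eqn:HA; [apply IHHt; constructor |]; easy.
  - specialize (IHHt1 HG); rewrite (IHHt2 HG) in IHHt1; exact IHHt1.
  - rewrite IHHt1, IHHt2 by assumption; reflexivity.
  - apply andb_prop in IHHt as []; assumption.
  - apply andb_prop in IHHt as []; assumption.
  - reflexivity.
  - rewrite IHHt by assumption; reflexivity.
  - rewrite IHHt by assumption; apply orb_true_r.
  - apply orb_prop in IHHt1 as [HA1 | HA2]; auto.
  - discriminate (IHHt HG).
Qed.

Definition provable (A : ty) : Prop := exists t, typed [] t A.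

Definition refutable (A : ty) : Prop := provable (TArr A TZero).

Lemma provable_unit : provable TUnit.
Proof. exists Unit; constructor. Qed.

Lemma refutable_zero : refutable TZero.
Proof. exists (Lam (Var 0)); repeat constructor. Qed.

Lemma provable_arr_cod A B : provable B -> provable (TArr A B).
Proof.
  intros [t Ht]; exists (Lam t); constructor; apply typed_weaken_closed, Ht.
Qed.

Lemma provable_arr_dom A B : refutable A -> provable (TArr A B).
Proof.
  intros [r Hr]; exists (Lam (Absurd (App r (Var 0)))).
  repeat econstructor; apply typed_weaken_closed, Hr.
Qed.

Lemma refutable_arr A B : provable A -> refutable B -> refutable (TArr A B).
Proof.
  intros [t Ht] [r Hr]; exists (Lam (App r (App (Var 0) t))).
  repeat econstructor; apply typed_weaken_closed; eassumption.
Qed.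

Lemma provable_prod A B : provable A -> provable B -> provable (TProd A B).
Proof. intros [t Ht] [u Hu]; exists (Pair t u); constructor; assumption. Qed.

Lemma refutable_prod_l A B : refutable A -> refutable (TProd A B).
Proof.
  intros [r Hr]; exists (Lam (App r (Proj1 (Var 0)))).
  repeat econstructor; apply typed_weaken_closed, Hr.
Qed.

Lemma refutable_prod_r A B : refutable B -> refutable (TProd A B).
Proof.
  intros [r Hr]; exists (Lam (App r (Proj2 (Var 0)))).
  repeat econstructor; apply typed_weaken_closed, Hr.
Qed.

Lemma provable_sum_l A B : provable A -> provable (TSum A B).
Proof. intros [t Ht]; exists (Inj1 t); constructor; assumption. Qed.

Lemma provable_sum_r A B : provable B -> provable (TSum A B).
Proof. intros [t Ht]; exists (Inj2 t); constructor; assumption. Qed.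

Lemma refutable_sum A B : refutable A -> refutable B -> refutable (TSum A B).
Proof.
  intros [r1 Hr1] [r2 Hr2].
  exists (Lam (Match (Var 0) (App r1 (Var 0)) (App r2 (Var 0)))).
  repeat econstructor; apply typed_weaken_closed; eassumption.
Qed.

Lemma closed_ty_decided rho A :
  closed_ty A -> if ty_eval rho A then provable A else refutable A.
Proof.
  induction A as [X | A IHA B IHB | A IHA B IHB | | A IHA B IHB |];
    simpl; intros HC; try destruct HC as [HA HB].
  - contradiction.
  - specialize (IHA HA); specialize (IHB HB).
    destruct (ty_eval rho A), (ty_eval rho B); simpl.
    + apply provable_arr_cod, IHB.
    + apply refutable_arr; assumption.
    + apply provable_arr_cod, IHB.
    + apply provable_arr_dom, IHA.
  - specialize (IHA HA); specialize (IHB HB).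
    destruct (ty_eval rho A), (ty_eval rho B); simpl.
    + apply provable_prod; assumption.
    + apply refutable_prod_r, IHB.
    + apply refutable_prod_l, IHA.
    + apply refutable_prod_l, IHA.
  - exact provable_unit.
  - specialize (IHA HA); specialize (IHB HB).
    destruct (ty_eval rho A), (ty_eval rho B); simpl.
    + apply provable_sum_l, IHA.
    + apply provable_sum_l, IHA.
    + apply provable_sum_r, IHB.
    + apply refutable_sum; assumption.
  - exact refutable_zero.
Qed.

Lemma absurd_of_refutable_hyp G B :
  In B G -> refutable B -> exists w, typed G w TZero.
Proof.
  intros HB [r Hr]; destruct (In_nth_error G B HB) as [n Hn].
  exists (App r (Var n)); econstructor; [apply typed_weaken_closed, Hr | constructor; exact Hn].
Qed.

Theorem mainTheorem8 (G : ctx) (A : ty) :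
  closed_ctx G -> closed_ty A ->
  (exists t, typed G t A) ->
  (exists u, typed [] u A) \/ (exists w, typed G w TZero).
Proof.
  intros HG HA [t Ht].
  set (rho := fun _ : nat => true).
  destruct (Forall_Exists_dec (fun B => ty_eval rho B = true)
              (fun B => bool_dec (ty_eval rho B) true) G) as [Htrue | Hfalse].
  - left.
    pose proof (closed_ty_decided rho A HA) as HAdec.
    rewrite (typed_sound rho G t A Ht Htrue) in HAdec; exact HAdec.
  - right.
    apply Exists_exists in Hfalse as [B [HBin HBfalse]].
    pose proof (closed_ty_decided rho B (proj1 (Forall_forall _ G) HG B HBin)) as HBdec.
    apply not_true_is_false in HBfalse; rewrite HBfalse in HBdec.
    exact (absurd_of_refutable_hyp G B HBin HBdec).
Qed.
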